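(* Let $u$ be the solution of the Cauchy problem in the context. Then for every $t>0$, $u(\cdot,t)$ is convex on $[0,1]$. Moreover there exist constants $c>0$ and $\mu\in\mathbb{R}$ such that $0\le\partial^2_{xx}u(x,t)\le c\,e^{\mu t}$ for all $x\in[0,1]$ and $t>0$.
   Context: Constants: $f_0>0$, $f_1\ge0$ with $\sigma=f_0-f_1>0$; $\lambda_0,\lambda_1\ge0$; $\gamma_0,\gamma_1\in(0,1]$. With $\mathcal{J}_0u(x,t)=u(x+\gamma_0(1-x),t)-u(x,t)$ and $\mathcal{J}_1u(x,t)=u(x-\gamma_1x,t)-u(x,t)$, $u$ is the unique (mild) solution, which is $C^\infty$ on $[0,1]\times[0,\infty)$, of \[ \partial_tu+\sigma(1-x)x\,\partial_xu=\lambda_0f_0\mathcal{J}_0u+\lambda_1f_1\mathcal{J}_1u\ (0\le x\le1,\ t>0),\quad u(x,0)=x. \] *)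

From Stdlib Require Import Reals List.
From Coquelicot Require Import Coquelicot.
Open Scope R_scope.

(* Iterated partial derivatives of a function of (x,t): the list gives the
   order of differentiation, [true] = d/dx, [false] = d/dt (innermost last). *)
Fixpoint pderiv (l : list bool) (f : R -> R -> R) : R -> R -> R :=
  match l with
  | nil => f
  | cons b l' =>
      if b then (fun x t => Derive (fun y => pderiv l' f y t) x)
      else (fun x t => Derive (fun s => pderiv l' f x s) t)
  end.

Definition smooth2 (f : R -> R -> R) : Prop :=
  forall (l : list bool) (x t : R),
    ex_derive (fun y => pderiv l f y t) x /\
    ex_derive (fun s => pderiv l f x s) t /\
    continuous (fun p : R * R => pderiv l f (fst p) (snd p)) (x, t).

Definition J0 (g0 : R) (u : R -> R -> R) (x t : R) : R :=
  u (x + g0 * (1 - x)) t - u x t.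
Definition J1 (g1 : R) (u : R -> R -> R) (x t : R) : R :=
  u (x - g1 * x) t - u x t.

Definition solves_cauchy (f0 f1 l0 l1 g0 g1 : R) (u : R -> R -> R) : Prop :=
  (forall x t, 0 <= x <= 1 -> 0 < t ->
     Derive (fun s => u x s) t
     + (f0 - f1) * (1 - x) * x * Derive (fun y => u y t) x
     = l0 * f0 * J0 g0 u x t + l1 * f1 * J1 g1 u x t) /\
  (forall x, 0 <= x <= 1 -> u x 0 = x).

Definition convex_on01 (g : R -> R) : Prop :=
  forall x y a, 0 <= x <= 1 -> 0 <= y <= 1 -> 0 <= a <= 1 ->
    g (a * x + (1 - a) * y) <= a * g x + (1 - a) * g y.

From Stdlib Require Import Reals Lra Psatz List Classical ClassicalEpsilon.
From Coquelicot Require Import Coquelicot.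
Open Scope R_scope.

(* Write v = u_x, w = u_xx, A = l0 f0, B = l1 f1, sg = f0 - f1 and x0 = x + g0 (1 - x),
   x1 = x - g1 x, both in [0,1]. Differentiating the equation in x gives
     v_t = A ((1-g0) v(x0) - v) + B ((1-g1) v(x1) - v) - sg ((1-2x) v + (1-x) x v_x),
     w_t = A ((1-g0)^2 w(x0) - w) + B ((1-g1)^2 w(x1) - w)
           - sg (-2 v + 2 (1-2x) w + (1-x) x w_x).
   At a spatial extremum over [0,1] the transport term (1-x) x (.)_x vanishes, also at the
   endpoints, and the jump terms have the sign of the extremum. A minimum principle on
   [0,1] x [0,oo) therefore gives successively 0 <= v <= e^(sg t) and 0 <= w <= 2 e^(3 sg t)
   from v(.,0) = 1 and w(.,0) = 0; convexity is w >= 0. *)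

Lemma ex_point_in_01_near c d : 0 <= c <= 1 -> 0 < d ->
  exists y, 0 < y < 1 /\ Rabs (y - c) < d.
Proof.
  intros Hc Hd.
  set (m := Rmin d (1 / 2) / 2).
  assert (Hm : 0 < m <= 1 / 4 /\ m < d).
  { unfold m; pose proof (Rmin_l d (1 / 2)); pose proof (Rmin_r d (1 / 2)).
    pose proof (Rmin_pos d (1 / 2) Hd ltac:(lra)); lra. }
  destruct (Rle_dec c (1 / 2)).
  - exists (c + m); split; [lra|]. apply Rabs_def1; lra.
  - exists (c - m); split; [lra|]. apply Rabs_def1; lra.
Qed.

Lemma continuous_eq_on_01 (f g : R -> R) c : 0 <= c <= 1 ->
  continuous f c -> continuous g c ->
  (forall y, 0 < y < 1 -> f y = g y) -> f c = g c.
Proof.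
  intros Hc Hf Hg Heq.
  destruct (Req_dec (f c - g c) 0) as [E|N]; [lra|exfalso].
  assert (He : 0 < Rabs (f c - g c)) by (apply Rabs_pos_lt; exact N).
  destruct (continuous_minus f g c Hf Hg _ (locally_ball _ (mkposreal _ He))) as [d Hd].
  destruct (ex_point_in_01_near c d Hc (cond_pos d)) as [y [Hy Hyc]].
  specialize (Hd y Hyc).
  change (Rabs (f y - g y - (f c - g c)) < Rabs (f c - g c)) in Hd.
  rewrite (Heq y Hy), Rminus_diag, Rminus_0_l, Rabs_Ropp in Hd. lra.
Qed.

Lemma locally_in_01 (P : R -> Prop) y : 0 < y < 1 ->
  (forall z, 0 <= z <= 1 -> P z) -> locally y P.
Proof.
  intros Hy HP.
  assert (Hd : 0 < Rmin y (1 - y)) by (apply Rmin_pos; lra).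
  exists (mkposreal _ Hd). intros z Hz. apply HP.
  change (Rabs (z - y) < Rmin y (1 - y)) in Hz.
  pose proof (Rmin_l y (1 - y)); pose proof (Rmin_r y (1 - y)).
  apply Rabs_def2 in Hz. lra.
Qed.

Lemma ex_lt_left_of_derive_pos f c d r : is_derive f c d -> 0 < d -> 0 < r ->
  exists s, c - r < s < c /\ f s < f c.
Proof.
  intros Hf Hd Hr. apply is_derive_Reals in Hf.
  destruct (Hf d Hd) as [del Hdel].
  set (h := - (Rmin del r / 2)).
  assert (Hh : 0 < Rmin del r) by (apply Rmin_pos; [apply cond_pos|lra]).
  pose proof (Rmin_l del r); pose proof (Rmin_r del r).
  assert (Hh0 : h <> 0) by (unfold h; lra).
  assert (Habs : Rabs h < del) by (unfold h; rewrite Rabs_Ropp, Rabs_right; lra).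
  specialize (Hdel h Hh0 Habs). apply Rabs_def2 in Hdel.
  exists (c + h). split; [unfold h; lra|].
  assert (Hq : 0 < (f (c + h) - f c) / h) by lra.
  assert (E : f (c + h) - f c = (f (c + h) - f c) / h * h) by (field; exact Hh0).
  assert (h < 0) by (unfold h; lra). nra.
Qed.

Lemma derive_at_min_01 f x d : 0 <= x <= 1 -> is_derive f x d ->
  (forall y, 0 <= y <= 1 -> f x <= f y) -> (1 - x) * x * d = 0.
Proof.
  intros Hx Hd Hmin.
  destruct (Req_dec x 0) as [->|N0]; [ring|].
  destruct (Req_dec x 1) as [->|N1]; [ring|].
  apply is_derive_Reals in Hd.
  change d with (derive_pt f x (exist _ d Hd)).
  rewrite (deriv_minimum f 0 1 x); [ring|lra|lra|].
  intros y Hy0 Hy1; apply Hmin; lra.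
Qed.

Lemma derive_at_max_01 f x d : 0 <= x <= 1 -> is_derive f x d ->
  (forall y, 0 <= y <= 1 -> f y <= f x) -> (1 - x) * x * d = 0.
Proof.
  intros Hx Hd Hmax.
  assert (H : (1 - x) * x * (- d) = 0).
  { apply (derive_at_min_01 (fun y => - f y)); [exact Hx | exact (is_derive_opp _ _ _ Hd) |].
    intros y Hy; specialize (Hmax y Hy); lra. }
  lra.
Qed.

Lemma continuity_pt_of_derive g g' y : (forall z, is_derive g z (g' z)) -> continuity_pt g y.
Proof.
  intros H. apply continuity_pt_filterlim.
  apply (ex_derive_continuous g). exists (g' y); apply H.
Qed.

Lemma le_of_derive_nonneg g g' p q : (forall y, is_derive g y (g' y)) ->
  (forall y, p <= y <= q -> 0 <= g' y) -> p <= q -> g p <= g q.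
Proof.
  intros Hd Hpos Hpq.
  destruct (MVT_gen g p q g') as [c [Hc Hm]].
  - intros; apply Hd.
  - intros; apply (continuity_pt_of_derive g g'), Hd.
  - rewrite Rmin_left, Rmax_right in Hc by lra.
    assert (0 <= g' c * (q - p)) by (apply Rmult_le_pos; [apply Hpos|]; lra).
    lra.
Qed.

Lemma convex_on01_of_derive2_nonneg (g g' g'' : R -> R) :
  (forall y, is_derive g y (g' y)) -> (forall y, is_derive g' y (g'' y)) ->
  (forall y, 0 <= y <= 1 -> 0 <= g'' y) -> convex_on01 g.
Proof.
  intros H1 H2 H3.
  assert (Hle : forall x y a, 0 <= x -> x <= y -> y <= 1 -> 0 <= a <= 1 ->
     g (a * x + (1 - a) * y) <= a * g x + (1 - a) * g y).
  { intros x y a Hx Hxy Hy Ha.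
    set (z := a * x + (1 - a) * y).
    assert (Hz : x <= z <= y) by (unfold z; nra).
    destruct (MVT_gen g x z g') as [c1 [Hc1 Hm1]];
      [intros; apply H1 | intros; apply (continuity_pt_of_derive g g'), H1 |].
    destruct (MVT_gen g z y g') as [c2 [Hc2 Hm2]];
      [intros; apply H1 | intros; apply (continuity_pt_of_derive g g'), H1 |].
    rewrite Rmin_left, Rmax_right in Hc1, Hc2 by lra.
    assert (Hg : g' c1 <= g' c2).
    { apply (le_of_derive_nonneg g' g''); [exact H2| intros; apply H3 |]; lra. }
    assert (Id : a * g x + (1 - a) * g y - g z = a * (1 - a) * (y - x) * (g' c2 - g' c1)).
    { transitivity (- a * (g z - g x) + (1 - a) * (g y - g z)); [ring|].
      rewrite Hm1, Hm2. unfold z. ring. }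
    assert (0 <= a * (1 - a) * (y - x) * (g' c2 - g' c1)) by (repeat apply Rmult_le_pos; lra).
    lra. }
  intros x y a Hx Hy Ha.
  destruct (Rle_dec x y) as [r|r]; [apply Hle; lra|].
  specialize (Hle y x (1 - a) ltac:(lra) ltac:(lra) ltac:(lra) ltac:(lra)).
  replace (1 - (1 - a)) with a in Hle by ring.
  replace (a * x + (1 - a) * y) with ((1 - a) * y + a * x) by ring. lra.
Qed.

Lemma pos_on_time_strip (y : R -> R -> R) c :
  (forall x, 0 <= x <= 1 -> continuity_2d_pt y x c) ->
  (forall x, 0 <= x <= 1 -> 0 < y x c) ->
  exists d, 0 < d /\ forall x s, 0 <= x <= 1 -> Rabs (s - c) < d -> 0 < y x s.
Proof.
  intros Hc Hp.
  assert (Hloc : forall x, exists r : posreal, 0 <= x <= 1 ->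
     forall x' s, Rabs (x' - x) < r -> Rabs (s - c) < r -> 0 < y x' s).
  { intros x. destruct (classic (0 <= x <= 1)) as [Hx|Hx].
    - destruct (Hc x Hx (mkposreal _ (Hp x Hx))) as [r Hr]. exists r.
      intros _ x' s h1 h2. specialize (Hr x' s h1 h2). simpl in Hr.
      apply Rabs_def2 in Hr. lra.
    - exists (mkposreal 1 Rlt_0_1). intros; contradiction. }
  set (delta := fun x => proj1_sig (constructive_indefinite_description _ (Hloc x))).
  destruct (compactness_value_1d 0 1 delta) as [d Hd].
  exists d. split; [apply cond_pos|]. intros x s Hx Hs.
  apply Rnot_le_lt. intros Hle.
  apply (Hd x Hx). intros [x1 [Hx1 [H1 H2]]].
  assert (0 < y x s); [|lra].
  apply (proj2_sig (constructive_indefinite_description _ (Hloc x1))); auto.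
  fold (delta x1). lra.
Qed.

Lemma first_zero_time (y : R -> R -> R) x0 t0 :
  (forall x t, continuity_2d_pt y x t) ->
  (forall x, 0 <= x <= 1 -> 0 < y x 0) ->
  0 <= x0 <= 1 -> 0 <= t0 -> y x0 t0 < 0 ->
  exists xs ts, 0 <= xs <= 1 /\ 0 < ts /\ y xs ts = 0 /\
    (forall x, 0 <= x <= 1 -> 0 <= y x ts) /\
    (forall s, 0 <= s < ts -> 0 < y xs s).
Proof.
  intros Hc Hinit Hx0 Ht0 Hneg.
  set (S := fun t => 0 <= t <= t0 /\
              forall s x, 0 <= s <= t -> 0 <= x <= 1 -> 0 < y x s).
  assert (S0 : S 0).
  { split; [lra|]. intros s x Hs Hx. replace s with 0 by lra. auto. }
  destruct (completeness S) as [ts [Hub Hlub]].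
  { exists t0. intros t [Ht _]. lra. }
  { exists 0. exact S0. }
  assert (Hts : 0 <= ts <= t0).
  { split; [apply Hub, S0 | apply Hlub; intros t [Ht _]; lra]. }
  assert (Hbelow : forall s x, 0 <= s < ts -> 0 <= x <= 1 -> 0 < y x s).
  { intros s x Hs Hx. apply Rnot_le_lt. intros Hle.
    assert (Hs_ub : is_upper_bound S s).
    { intros t [Ht Hall]. apply Rnot_lt_le. intros Hst.
      specialize (Hall s x ltac:(lra) Hx). lra. }
    specialize (Hlub s Hs_ub). lra. }
  assert (Hat : forall x, 0 <= x <= 1 -> 0 <= y x ts).
  { intros x Hx. destruct (Req_dec ts 0) as [E|N]; [rewrite E; left; auto|].
    apply Rnot_lt_le. intros Hlt.
    assert (He : 0 < - y x ts) by lra.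
    destruct (Hc x ts (mkposreal _ He)) as [d Hd].
    pose proof (Rmin_pos d ts (cond_pos d) ltac:(lra)).
    pose proof (Rmin_l d ts); pose proof (Rmin_r d ts).
    set (s := ts - Rmin d ts / 2).
    assert (Hys := Hbelow s x ltac:(unfold s; lra) Hx).
    assert (Hx' : Rabs (x - x) < d) by (rewrite Rminus_diag, Rabs_R0; apply cond_pos).
    assert (Hs : Rabs (s - ts) < d) by (unfold s; apply Rabs_def1; lra).
    specialize (Hd x s Hx' Hs). simpl in Hd. apply Rabs_def2 in Hd. lra. }
  assert (Hzero : exists xs, 0 <= xs <= 1 /\ y xs ts = 0).
  { apply NNPP. intros Hno.
    assert (Hpos : forall x, 0 <= x <= 1 -> 0 < y x ts).
    { intros x Hx. destruct (Hat x Hx) as [h|h]; [exact h|].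
      exfalso; apply Hno; exists x; auto. }
    destruct (pos_on_time_strip y ts (fun x _ => Hc x ts) Hpos) as [d [Hd0 Hd]].
    destruct (Rle_lt_dec (ts + d / 2) t0) as [Hle|Hlt].
    - assert (Hlater : S (ts + d / 2)).
      { split; [lra|]. intros s x Hs Hx.
        destruct (Rlt_le_dec s ts); [apply Hbelow; lra|].
        apply Hd; [exact Hx|]. apply Rabs_def1; lra. }
      specialize (Hub _ Hlater). lra.
    - assert (0 < y x0 t0) by (apply Hd; [exact Hx0|]; apply Rabs_def1; lra). lra. }
  destruct Hzero as [xs [Hxs Hys]].
  assert (Hts0 : 0 < ts).
  { destruct (Req_dec ts 0) as [E|N]; [|lra].
    rewrite E in Hys. specialize (Hinit xs Hxs). lra. }
  exists xs, ts. repeat split; auto; lra.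
Qed.

Lemma continuity_2d_pt_exp (b : R) x t : continuity_2d_pt (fun _ s => exp (b * s)) x t.
Proof.
  apply (continuity_1d_2d_pt_comp (fun s => exp (b * s)) (fun _ v => v)).
  - apply continuity_pt_filterlim, (ex_derive_continuous (fun s => exp (b * s))).
    auto_derive. auto.
  - apply continuity_2d_pt_id2.
Qed.

Lemma min_principle (z zt : R -> R -> R) (K : R) :
  (forall x t, continuity_2d_pt z x t) ->
  (forall x t, is_derive (fun s => z x s) t (zt x t)) ->
  (forall x, 0 <= x <= 1 -> 0 <= z x 0) ->
  (forall x t, 0 <= x <= 1 -> 0 < t -> (forall y, 0 <= y <= 1 -> z x t <= z y t) ->
     z x t < 0 -> K * z x t <= zt x t) ->
  forall x t, 0 <= x <= 1 -> 0 <= t -> 0 <= z x t.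
Proof.
  intros Hc Hd H0 Hmin x0 t0 Hx0 Ht0.
  apply Rnot_lt_le. intros Hneg.
  set (L := K + 1).
  set (eps := - z x0 t0 / (2 * exp (L * t0))).
  assert (Heps : 0 < eps).
  { unfold eps. pose proof (exp_pos (L * t0)). apply Rdiv_lt_0_compat; lra. }
  (* The perturbation makes the time derivative positive at the first zero of [y],
     contradicting [y > 0] just before it. *)
  set (y := fun x s => z x s + eps * exp (L * s)).
  destruct (first_zero_time y x0 t0) as [xs [ts [Hxs [Hts [Hys [Hat Hbelow]]]]]];
    [ | | exact Hx0 | exact Ht0 | | ].
  - intros x t. apply continuity_2d_pt_plus; [apply Hc|].
    apply continuity_2d_pt_mult; [apply continuity_2d_pt_const | apply continuity_2d_pt_exp].
  - intros x Hx. unfold y. rewrite Rmult_0_r, exp_0. specialize (H0 x Hx). lra.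
  - assert (E : eps * exp (L * t0) = - z x0 t0 / 2).
    { unfold eps. field. apply Rgt_not_eq, exp_pos. }
    unfold y. lra.
  - assert (HE : 0 < eps * exp (L * ts)) by (apply Rmult_lt_0_compat; [|apply exp_pos]; lra).
    unfold y in Hys, Hat, Hbelow.
    assert (Hzmin : forall x, 0 <= x <= 1 -> z xs ts <= z x ts).
    { intros x Hx. specialize (Hat x Hx). lra. }
    assert (Hzt := Hmin xs ts Hxs Hts Hzmin ltac:(lra)).
    assert (Hdy : is_derive (fun s => y xs s) ts (zt xs ts + eps * (L * exp (L * ts)))).
    { apply (is_derive_plus (fun s => z xs s) (fun s => eps * exp (L * s))); [apply Hd|].
      auto_derive; [auto | ring]. }
    assert (Hpos : 0 < zt xs ts + eps * (L * exp (L * ts))).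
    { replace (z xs ts) with (- (eps * exp (L * ts))) in Hzt by lra.
      assert (K * - (eps * exp (L * ts)) + eps * (L * exp (L * ts)) = eps * exp (L * ts))
        by (unfold L; ring).
      lra. }
    destruct (ex_lt_left_of_derive_pos _ _ _ ts Hdy Hpos Hts) as [s [Hs Hlt]].
    specialize (Hbelow s ltac:(lra)). unfold y in Hlt. lra.
Qed.

Lemma jump_nonneg_at_min A c a m : 0 <= A -> 0 <= c <= 1 -> m <= a -> m <= 0 ->
  0 <= A * (c * a - m).
Proof. intros; apply Rmult_le_pos; nra. Qed.

Lemma jump_nonpos_at_max A c a m : 0 <= A -> 0 <= c <= 1 -> a <= m -> 0 <= m ->
  A * (c * a - m) <= 0.
Proof. intros; assert (0 <= A * (m - c * a)) by (apply Rmult_le_pos; nra); lra. Qed.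

Section SmoothSolution.

Variable u : R -> R -> R.
Hypothesis u_smooth : smooth2 u.

Lemma pderiv_ex_derive_x l x t : ex_derive (fun y => pderiv l u y t) x.
Proof. exact (proj1 (u_smooth l x t)). Qed.

Lemma pderiv_is_derive_x l x t :
  is_derive (fun y => pderiv l u y t) x (pderiv (true :: l) u x t).
Proof. apply Derive_correct, pderiv_ex_derive_x. Qed.

Lemma pderiv_is_derive_t l x t :
  is_derive (fun s => pderiv l u x s) t (pderiv (false :: l) u x t).
Proof. apply Derive_correct. exact (proj1 (proj2 (u_smooth l x t))). Qed.

Lemma pderiv_continuous_x l x t : continuous (fun y => pderiv l u y t) x.
Proof. apply (ex_derive_continuous (fun y => pderiv l u y t)), pderiv_ex_derive_x. Qed.

Lemma pderiv_continuity_2d l x t : continuity_2d_pt (pderiv l u) x t.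
Proof. apply continuity_2d_pt_filterlim. exact (proj2 (proj2 (u_smooth l x t))). Qed.

Lemma pderiv_tx l x t :
  pderiv (false :: true :: l) u x t = pderiv (true :: false :: l) u x t.
Proof.
  symmetry. apply (Schwarz (pderiv l u) x t).
  - exists (mkposreal 1 Rlt_0_1). intros a b _ _.
    split; [exact (proj1 (u_smooth l a b)) |].
    split; [exact (proj1 (proj2 (u_smooth l a b))) | split].
    + exact (proj1 (u_smooth (false :: l) a b)).
    + exact (proj1 (proj2 (u_smooth (true :: l) a b))).
  - apply (pderiv_continuity_2d (true :: false :: l)).
  - apply (pderiv_continuity_2d (false :: true :: l)).
Qed.

(* An evolution identity for [pderiv l u] on [0,1] x (0,oo) differentiates in x: on the
   open strip by Schwarz's theorem, up to x = 0, 1 by continuity. *)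
Lemma pderiv_t_eq_derive_x l (E E' : R -> R -> R) :
  (forall x t, 0 <= x <= 1 -> 0 < t -> pderiv (false :: l) u x t = E x t) ->
  (forall x t, is_derive (fun y => E y t) x (E' x t)) ->
  (forall x t, continuous (fun y => E' y t) x) ->
  forall x t, 0 <= x <= 1 -> 0 < t -> pderiv (false :: true :: l) u x t = E' x t.
Proof.
  intros HE HD HC x t Hx Ht.
  apply (continuous_eq_on_01 (fun y => pderiv (false :: true :: l) u y t) (fun y => E' y t));
    [exact Hx | apply pderiv_continuous_x | apply HC |].
  intros y Hy. rewrite pderiv_tx.
  change (Derive (fun z => pderiv (false :: l) u z t) y = E' y t).
  rewrite (Derive_ext_loc _ (fun z => E z t)).
  - apply is_derive_unique, HD.
  - apply locally_in_01; [exact Hy|]. intros z Hz. apply HE; assumption.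
Qed.

Local Notation ux := (pderiv (true :: nil) u).
Local Notation uxx := (pderiv (true :: true :: nil) u).
Local Notation uxxx := (pderiv (true :: true :: true :: nil) u).

Local Ltac solve_ex_derive_pderiv :=
  repeat split;
  first [ exact (pderiv_ex_derive_x nil _ _)
        | exact (pderiv_ex_derive_x (true :: nil) _ _)
        | exact (pderiv_ex_derive_x (true :: true :: nil) _ _)
        | exact (pderiv_ex_derive_x (true :: true :: true :: nil) _ _) ].

Variables A B sg g0 g1 : R.

Definition rhs_u x t :=
  A * (u (x + g0 * (1 - x)) t - u x t) + B * (u (x - g1 * x) t - u x t)
  - sg * (1 - x) * x * ux x t.

Definition rhs_ux x t :=
  A * ((1 - g0) * ux (x + g0 * (1 - x)) t - ux x t)
  + B * ((1 - g1) * ux (x - g1 * x) t - ux x t)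
  - sg * ((1 - 2 * x) * ux x t + (1 - x) * x * uxx x t).

Definition rhs_uxx x t :=
  A * ((1 - g0) ^ 2 * uxx (x + g0 * (1 - x)) t - uxx x t)
  + B * ((1 - g1) ^ 2 * uxx (x - g1 * x) t - uxx x t)
  - sg * (- 2 * ux x t + 2 * (1 - 2 * x) * uxx x t + (1 - x) * x * uxxx x t).

Lemma rhs_u_is_derive_x x t : is_derive (fun y => rhs_u y t) x (rhs_ux x t).
Proof.
  unfold rhs_u, rhs_ux. auto_derive; [solve_ex_derive_pderiv|].
  cbn [pderiv]. unfold Rminus. ring.
Qed.

Lemma rhs_ux_is_derive_x x t : is_derive (fun y => rhs_ux y t) x (rhs_uxx x t).
Proof.
  unfold rhs_ux, rhs_uxx. auto_derive; [solve_ex_derive_pderiv|].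
  cbn [pderiv]. unfold Rminus. ring.
Qed.

Lemma rhs_ux_continuous_x x t : continuous (fun y => rhs_ux y t) x.
Proof.
  apply (ex_derive_continuous (fun y => rhs_ux y t)).
  exists (rhs_uxx x t). apply rhs_ux_is_derive_x.
Qed.

Lemma rhs_uxx_continuous_x x t : continuous (fun y => rhs_uxx y t) x.
Proof.
  apply (ex_derive_continuous (fun y => rhs_uxx y t)).
  unfold rhs_uxx. auto_derive. solve_ex_derive_pderiv.
Qed.

Hypothesis u_eq : forall x t, 0 <= x <= 1 -> 0 < t -> pderiv (false :: nil) u x t = rhs_u x t.
Hypothesis u_init : forall x, 0 <= x <= 1 -> u x 0 = x.

Lemma ux_t_eq x t : 0 <= x <= 1 -> 0 < t -> pderiv (false :: true :: nil) u x t = rhs_ux x t.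
Proof.
  apply (pderiv_t_eq_derive_x nil rhs_u rhs_ux u_eq rhs_u_is_derive_x rhs_ux_continuous_x).
Qed.

Lemma uxx_t_eq x t : 0 <= x <= 1 -> 0 < t ->
  pderiv (false :: true :: true :: nil) u x t = rhs_uxx x t.
Proof.
  apply (pderiv_t_eq_derive_x (true :: nil) rhs_ux rhs_uxx ux_t_eq rhs_ux_is_derive_x
           rhs_uxx_continuous_x).
Qed.

Lemma ux_init x : 0 <= x <= 1 -> ux x 0 = 1.
Proof.
  intros Hx. apply (continuous_eq_on_01 (fun y => ux y 0) (fun _ => 1));
    [exact Hx | apply pderiv_continuous_x | apply continuous_const |].
  intros y Hy. cbn [pderiv].
  rewrite (Derive_ext_loc _ (fun z => z)); [apply Derive_id|].
  apply locally_in_01; assumption.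
Qed.

Lemma uxx_init x : 0 <= x <= 1 -> uxx x 0 = 0.
Proof.
  intros Hx. apply (continuous_eq_on_01 (fun y => uxx y 0) (fun _ => 0));
    [exact Hx | apply pderiv_continuous_x | apply continuous_const |].
  intros y Hy. change (Derive (fun z => ux z 0) y = 0).
  rewrite (Derive_ext_loc _ (fun _ => 1)); [apply Derive_const|].
  apply locally_in_01; [exact Hy|]. exact ux_init.
Qed.

Hypotheses (HA : 0 <= A) (HB : 0 <= B) (Hsg : 0 < sg).
Hypotheses (Hg0 : 0 < g0 <= 1) (Hg1 : 0 < g1 <= 1).

Lemma jump_points_01 x : 0 <= x <= 1 -> 0 <= x + g0 * (1 - x) <= 1 /\ 0 <= x - g1 * x <= 1.
Proof. intros; split; nra. Qed.

Lemma ux_nonneg x t : 0 <= x <= 1 -> 0 <= t -> 0 <= ux x t.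
Proof.
  revert x t. apply (min_principle ux (pderiv (false :: true :: nil) u) sg).
  - apply pderiv_continuity_2d.
  - apply pderiv_is_derive_t.
  - intros x Hx. rewrite ux_init; lra.
  - intros x t Hx Ht Hmin Hneg. rewrite ux_t_eq by assumption.
    destruct (jump_points_01 x Hx) as [Hp0 Hp1].
    assert (Hcrit : (1 - x) * x * uxx x t = 0).
    { apply (derive_at_min_01 (fun y => ux y t)); [exact Hx | apply pderiv_is_derive_x | exact Hmin]. }
    assert (J0 := jump_nonneg_at_min A (1 - g0) _ _ HA ltac:(lra) (Hmin _ Hp0) ltac:(lra)).
    assert (J1 := jump_nonneg_at_min B (1 - g1) _ _ HB ltac:(lra) (Hmin _ Hp1) ltac:(lra)).
    assert (0 <= sg * (1 - x)) by (apply Rmult_le_pos; lra).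
    unfold rhs_ux. rewrite Hcrit. nra.
Qed.

Lemma ux_le_exp x t : 0 <= x <= 1 -> 0 <= t -> ux x t <= exp (sg * t).
Proof.
  intros Hx Ht. apply Rminus_le_0. revert x t Hx Ht.
  apply (min_principle (fun x t => exp (sg * t) - ux x t)
           (fun x t => sg * exp (sg * t) - pderiv (false :: true :: nil) u x t) sg).
  - intros x t. apply continuity_2d_pt_minus;
      [apply continuity_2d_pt_exp | apply pderiv_continuity_2d].
  - intros x t. apply (is_derive_minus (fun s => exp (sg * s)) (fun s => ux x s));
      [auto_derive; [auto | ring] | apply pderiv_is_derive_t].
  - intros x Hx. rewrite ux_init, Rmult_0_r, exp_0; lra.
  - intros x t Hx Ht Hmin Hneg. cbv beta in *. rewrite ux_t_eq by assumption.
    assert (Hmax : forall y, 0 <= y <= 1 -> ux y t <= ux x t).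
    { intros y Hy. specialize (Hmin y Hy). lra. }
    destruct (jump_points_01 x Hx) as [Hp0 Hp1].
    assert (Hcrit : (1 - x) * x * uxx x t = 0).
    { apply (derive_at_max_01 (fun y => ux y t)); [exact Hx | apply pderiv_is_derive_x | exact Hmax]. }
    pose proof (exp_pos (sg * t)).
    assert (J0 := jump_nonpos_at_max A (1 - g0) _ _ HA ltac:(lra) (Hmax _ Hp0) ltac:(lra)).
    assert (J1 := jump_nonpos_at_max B (1 - g1) _ _ HB ltac:(lra) (Hmax _ Hp1) ltac:(lra)).
    assert (0 <= sg * (1 - x)) by (apply Rmult_le_pos; lra).
    unfold rhs_ux. rewrite Hcrit. nra.
Qed.

Lemma uxx_nonneg x t : 0 <= x <= 1 -> 0 <= t -> 0 <= uxx x t.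
Proof.
  revert x t. apply (min_principle uxx (pderiv (false :: true :: true :: nil) u) (2 * sg)).
  - apply pderiv_continuity_2d.
  - apply pderiv_is_derive_t.
  - intros x Hx. rewrite uxx_init; lra.
  - intros x t Hx Ht Hmin Hneg. rewrite uxx_t_eq by assumption.
    destruct (jump_points_01 x Hx) as [Hp0 Hp1].
    assert (Hcrit : (1 - x) * x * uxxx x t = 0).
    { apply (derive_at_min_01 (fun y => uxx y t)); [exact Hx | apply pderiv_is_derive_x | exact Hmin]. }
    assert (J0 := jump_nonneg_at_min A ((1 - g0) ^ 2) _ _ HA ltac:(nra) (Hmin _ Hp0) ltac:(lra)).
    assert (J1 := jump_nonneg_at_min B ((1 - g1) ^ 2) _ _ HB ltac:(nra) (Hmin _ Hp1) ltac:(lra)).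
    assert (0 <= sg * ux x t) by (apply Rmult_le_pos; [lra | apply ux_nonneg; lra]).
    assert (0 <= sg * (1 - x)) by (apply Rmult_le_pos; lra).
    unfold rhs_uxx. rewrite Hcrit. nra.
Qed.

Lemma uxx_le_exp x t : 0 <= x <= 1 -> 0 <= t -> uxx x t <= 2 * exp (3 * sg * t).
Proof.
  intros Hx Ht. apply Rminus_le_0. revert x t Hx Ht.
  apply (min_principle (fun x t => 2 * exp (3 * sg * t) - uxx x t)
           (fun x t => 2 * (3 * sg * exp (3 * sg * t)) - pderiv (false :: true :: true :: nil) u x t)
           (2 * sg)).
  - intros x t. apply continuity_2d_pt_minus; [|apply pderiv_continuity_2d].
    apply continuity_2d_pt_mult; [apply continuity_2d_pt_const | apply continuity_2d_pt_exp].
  - intros x t. apply (is_derive_minus (fun s => 2 * exp (3 * sg * s)) (fun s => uxx x s));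
      [auto_derive; [auto | ring] | apply pderiv_is_derive_t].
  - intros x Hx. rewrite uxx_init, Rmult_0_r, exp_0; lra.
  - intros x t Hx Ht Hmin Hneg. cbv beta in *. rewrite uxx_t_eq by assumption.
    assert (Hmax : forall y, 0 <= y <= 1 -> uxx y t <= uxx x t).
    { intros y Hy. specialize (Hmin y Hy). lra. }
    destruct (jump_points_01 x Hx) as [Hp0 Hp1].
    assert (Hcrit : (1 - x) * x * uxxx x t = 0).
    { apply (derive_at_max_01 (fun y => uxx y t)); [exact Hx | apply pderiv_is_derive_x | exact Hmax]. }
    pose proof (exp_pos (3 * sg * t)).
    assert (J0 := jump_nonpos_at_max A ((1 - g0) ^ 2) _ _ HA ltac:(nra) (Hmax _ Hp0) ltac:(lra)).
    assert (J1 := jump_nonpos_at_max B ((1 - g1) ^ 2) _ _ HB ltac:(nra) (Hmax _ Hp1) ltac:(lra)).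
    assert (Hexp : exp (sg * t) <= exp (3 * sg * t)) by (apply Rlt_le, exp_increasing; nra).
    assert (sg * ux x t <= sg * exp (3 * sg * t)).
    { apply Rmult_le_compat_l; [lra|]. pose proof (ux_le_exp x t Hx ltac:(lra)). lra. }
    assert (0 <= sg * (1 - x)) by (apply Rmult_le_pos; lra).
    unfold rhs_uxx. rewrite Hcrit. nra.
Qed.

End SmoothSolution.

Theorem lemma4p3 (f0 f1 l0 l1 g0 g1 : R) (u : R -> R -> R)
  (Hf0 : 0 < f0) (Hf1 : 0 <= f1) (Hsig : 0 < f0 - f1)
  (Hl0 : 0 <= l0) (Hl1 : 0 <= l1)
  (Hg0 : 0 < g0 <= 1) (Hg1 : 0 < g1 <= 1)
  (Hsmooth : smooth2 u)
  (Hsol : solves_cauchy f0 f1 l0 l1 g0 g1 u) :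
  (forall t, 0 < t -> convex_on01 (fun x => u x t)) /\
  (exists c mu, 0 < c /\
     forall x t, 0 <= x <= 1 -> 0 < t ->
       0 <= Derive_n (fun y => u y t) 2 x <= c * exp (mu * t)).
Proof.
  destruct Hsol as [Hpde Hinit].
  assert (Hu : forall x t, 0 <= x <= 1 -> 0 < t ->
    pderiv (false :: nil) u x t = rhs_u u (l0 * f0) (l1 * f1) (f0 - f1) g0 g1 x t).
  { intros x t Hx Ht. specialize (Hpde x t Hx Ht).
    unfold rhs_u, J0, J1 in *. cbn [pderiv]. lra. }
  assert (HA : 0 <= l0 * f0) by (apply Rmult_le_pos; lra).
  assert (HB : 0 <= l1 * f1) by (apply Rmult_le_pos; lra).
  assert (Huxx := uxx_nonneg u Hsmooth _ _ _ _ _ Hu Hinit HA HB Hsig Hg0 Hg1).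
  split.
  - intros t Ht.
    apply (convex_on01_of_derive2_nonneg _ (fun y => pderiv (true :: nil) u y t)
             (fun y => pderiv (true :: true :: nil) u y t)).
    + exact (fun y => pderiv_is_derive_x u Hsmooth nil y t).
    + exact (fun y => pderiv_is_derive_x u Hsmooth (true :: nil) y t).
    + intros y Hy. apply Huxx; lra.
  - exists 2, (3 * (f0 - f1)). split; [lra|]. intros x t Hx Ht.
    change (Derive_n (fun y => u y t) 2 x) with (pderiv (true :: true :: nil) u x t).
    split; [apply Huxx; lra|].
    apply (uxx_le_exp u Hsmooth _ _ _ _ _ Hu Hinit HA HB Hsig Hg0 Hg1); lra.
Qed.
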